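(* Let $G$ be a finite dihedral group generated by two involutions $a$ and $b$. Then there is a conjugate $b'=c^{-1}bc$ ($c\in G$) of $b$ such that $a$ and $b'$ generate a Sylow $2$-subgroup of $G$. *)

From mathcomp Require Import all_boot all_fingroup all_solvable.

From mathcomp Require Import all_boot all_fingroup all_solvable.

(* Two involutions u, v generate <[u * v]> ><| <[v]>, since v inverts u * v;
   hence #|<<[set u; v]>>| = 2 #[u * v].  Conjugating b by (a * b) ^+ j turns
   the product a * b into (a * b) ^+ (2 j + 1); choosing 2 j + 1 to be the odd
   part of #[a * b], the new product has order the 2-part of #[a * b], so the
   new pair generates a subgroup of order |G|_2. *)

Set Implicit Arguments.
Unset Strict Implicit.
Unset Printing Implicit Defensive.
Local Open Scope group_scope.

Section TwoInvolutions.

Variables (gT : finGroupType) (u v : gT).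
Hypotheses (ou : #[u] = 2) (ov : #[v] = 2).

Lemma conjg_mul_invol : (u * v) ^ v = (u * v)^-1.
Proof.
have vv : v * v = 1 by rewrite -expg2 -ov expg_order.
by rewrite conjgE invMg !invg2id // -mulgA vv mulg1.
Qed.

Lemma invol_notin_cycle_mul : v \notin <[u * v]>.
Proof.
apply/negP => /cyclePmin[i lt_i def_v].
have fix_uv : (u * v) ^ v = u * v.
  by rewrite {2}def_v conjgE (commuteX i (commute_refl (u * v))) mulKg.
have le_uv2 : #[u * v] <= 2.
  apply: dvdn_leq => //; rewrite order_dvdn expg2 -eq_invg_mul.
  by rewrite -conjg_mul_invol fix_uv.
case: i lt_i def_v => [|[|i]] lt_i def_v.
- by move: ov; rewrite def_v expg0 order1.
- have u1 : u = 1 by apply: (mulIg v); rewrite mul1g {2}def_v expg1.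
  by move: ou; rewrite u1 order1.
- by have := leq_trans lt_i le_uv2.
Qed.

Lemma gen_invol_pairE : <<[set u; v]>> = <[u * v]> <*> <[v]>.
Proof.
have in_join x : x \in <[u * v]> :|: <[v]> -> x \in <[u * v]> <*> <[v]>.
  exact: mem_gen.
have u_uvv : u = u * v * v by rewrite -{2}(invg2id ov) mulgK.
apply/eqP; rewrite eqEsubset !join_subG !sub1set !cycle_subG -andbA.
apply/and4P; split.
- by rewrite {1}u_uvv groupM ?in_join // inE cycle_id ?orbT.
- by rewrite in_join // inE cycle_id orbT.
- by rewrite groupM ?mem_gen ?set21 ?set22.
- by rewrite mem_gen ?set22.
Qed.

Lemma card_gen_invol_pair : #|<<[set u; v]>>| = (#[u * v] * 2)%N.
Proof.
have nuv_v : <[v]> \subset 'N(<[u * v]>).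
  by rewrite cycle_subG; apply/normP; rewrite -cycleJ conjg_mul_invol cycleV.
rewrite gen_invol_pairE norm_joinEr // TI_cardMg -?orderE ?ov // setIC.
by rewrite prime_TIg -?orderE ?ov // cycle_subG invol_notin_cycle_mul.
Qed.

Lemma mul_conjg_expg_mul j : u * v ^ ((u * v) ^+ j) = (u * v) ^+ j.*2.+1.
Proof.
have inv_conj : ((u * v) ^+ j)^-1 ^ v = (u * v) ^+ j.
  by rewrite conjVg conjXg conjg_mul_invol expgVn invgK.
rewrite conjgE !mulgA -(mulgA u) (conjgC _ v) inv_conj.
by rewrite -!mulgA -expgD addnn mulgA -expgS.
Qed.

End TwoInvolutions.

Lemma orderX_partC (gT : finGroupType) (x : gT) (pi : nat_pred) :
  #[x ^+ (#[x]`_pi^')%N] = (#[x]`_pi)%N.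
Proof.
rewrite orderXdiv ?dvdn_part // -{1}(partnC pi (order_gt0 x)).
by rewrite mulnK ?part_gt0.
Qed.

Theorem lemma2p2 (gT : finGroupType) (G : {group gT}) (a b : gT)
    (ha : #[a] = 2%N) (hb : #[b] = 2%N) (hG : G :=: <<[set a; b]>>) :
  exists2 c, c \in G & 2.-Sylow(G) <<[set a; b ^ c]>>.
Proof.
set x := a * b; set m := (#[x]`_2^')%N.
have m_odd : odd m by rewrite odd_2'nat part_pnat.
have m_half : (m./2).*2.+1 = m by rewrite -[RHS]odd_double_half m_odd.
have aG : a \in G by rewrite hG mem_gen ?set21.
have bG : b \in G by rewrite hG mem_gen ?set22.
have xG : x \in G by rewrite groupM.
exists (x ^+ m./2); first exact: groupX.
rewrite pHallE gen_subG subUset !sub1set aG groupJ ?groupX //=.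
rewrite card_gen_invol_pair ?orderJ // mul_conjg_expg_mul // m_half orderX_partC.
rewrite hG card_gen_invol_pair // partnM ?order_gt0 //.
by rewrite (part_pnat_id (pnat_id _)).
Qed.
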